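(* There exist connected graphs $G$ and $H$ that have no non-trivial common factor (i.e., there is no non-trivial graph $K$ with $K\mid G$ and $K\mid H$) and yet are not weakly disjoint.
   Context: A weight function on finite $U$ is $\alpha:U\times U\to\mathbb{R}$, $\alpha\ge0$, symmetric, summing to $1$; degree $p(u)=\sum_{u'}\alpha(u,u')$; a graph is $(U,\alpha)$ (self-loops allowed); connected means any two distinct vertices are joined by a path of edges $(u,u')$ with $\alpha(u,u')>0$; non-trivial means at least two vertices have positive degree. For graphs $G=(U,\alpha)$, $H=(V,\beta)$ with degrees $p,q$, $H\mid G$ means there is a surjective $\phi:U\to V$ with (i) $q(v)=\sum_{u\in\phi^{-1}(v)}p(u)$ for all $v$, and (ii) $q(v)\sum_{u'\in\phi^{-1}(v')}\alpha(u,u')=p(u)\beta(v,v')$ for all $v,v'$, $u\in\phi^{-1}(v)$. A weight joining of $\alpha,\beta$ is a weight function $\gamma$ on $U\times V$ with degree $r(u,v)=\sum_{(u',v')}\gamma((u,v),(u',v'))$ such that $\sum_v r(u,v)=p(u)$, $\sum_u r(u,v)=q(v)$, $p(u)\sum_{\tilde v}\gamma((u,v),(u',\tilde v))=\alpha(u,u')r(u,v)$ and $q(v)\sum_{\tilde u}\gamma((u,v),(\tilde u,v'))=\beta(v,v')r(u,v)$. $G,H$ are weakly disjoint if every weight joining has degree $r(u,v)=p(u)q(v)$. *)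

From HB Require Import structures.
From mathcomp Require Import all_boot all_order all_algebra.
From mathcomp Require Import Rstruct.
From Stdlib Require Import Rdefinitions.
Set Implicit Arguments. Unset Strict Implicit. Unset Printing Implicit Defensive.
Import Order.TTheory GRing.Theory Num.Theory.
Local Open Scope ring_scope.

Definition weight_fun (U : finType) (a : U -> U -> R) : Prop :=
  (forall u u', 0 <= a u u') /\ (forall u u', a u u' = a u' u) /\
  \sum_(u : U) \sum_(u' : U) a u u' = 1.

Definition deg (U : finType) (a : U -> U -> R) (u : U) : R :=
  \sum_(u' : U) a u u'.

Definition gconnected (U : finType) (a : U -> U -> R) : Prop :=
  forall u u' : U, u != u' -> connect (fun x y => 0 < a x y) u u'.

Definition nontrivial (U : finType) (a : U -> U -> R) : Prop :=
  exists u1 u2 : U, u1 != u2 /\ 0 < deg a u1 /\ 0 < deg a u2.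

(* gdiv beta alpha : the graph (V,beta) divides the graph (U,alpha), H | G *)
Definition gdiv (V U : finType) (b : V -> V -> R) (a : U -> U -> R) : Prop :=
  exists phi : U -> V,
    (forall v, exists u, phi u = v) /\
    (forall v, deg b v = \sum_(u | phi u == v) deg a u) /\
    (forall v v' u, phi u = v ->
       deg b v * (\sum_(u' | phi u' == v') a u u') = deg a u * b v v').

Definition weight_joining (U V : finType) (a : U -> U -> R) (b : V -> V -> R)
  (g : (U * V)%type -> (U * V)%type -> R) : Prop :=
  weight_fun g /\
  (forall u, \sum_(v : V) deg g (u, v) = deg a u) /\
  (forall v, \sum_(u : U) deg g (u, v) = deg b v) /\
  (forall u v u', deg a u * (\sum_(v' : V) g (u, v) (u', v')) = a u u' * deg g (u, v)) /\
  (forall u v v', deg b v * (\sum_(u' : U) g (u, v) (u', v')) = b v v' * deg g (u, v)).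

Definition weakly_disjoint (U V : finType) (a : U -> U -> R) (b : V -> V -> R) : Prop :=
  forall g, weight_joining a b g -> forall u v, deg g (u, v) = deg a u * deg b v.

From mathcomp Require Import all_boot all_order all_algebra.
From mathcomp Require Import Rstruct.
From Stdlib Require Import Rdefinitions.
From mathcomp Require Import lra.
Set Implicit Arguments. Unset Strict Implicit. Unset Printing Implicit Defensive.
Import Order.TTheory GRing.Theory Num.Theory.
Local Open Scope ring_scope.

(* Take G on two vertices with all four weights 1/4, and H on two vertices with
   the product weight q(v) q(v') for q = (1/3, 2/3).  A common factor with two
   distinct vertices would be a bijective image of both, so its degrees would be
   1/2 and also in {1/3, 2/3}.  On the other hand, any coupling s of the degree
   vectors (1/2, 1/2) and q yields the weight joining s(u,v) s(u',v'), whose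
   degree is s; choosing s not equal to the product of its marginals shows that
   G and H are not weakly disjoint. *)

Definition prodw (U : finType) (s : U -> R) (u u' : U) : R := s u * s u'.

Section ProductWeight.
Variables (U : finType) (s : U -> R).
Hypothesis s_sum1 : \sum_u s u = 1.

Lemma deg_prodw u : deg (prodw s) u = s u.
Proof. by rewrite /deg /prodw -mulr_sumr s_sum1 mulr1. Qed.

Lemma weight_fun_prodw : (forall u, 0 <= s u) -> weight_fun (prodw s).
Proof.
move=> s_ge0; split; first by move=> u u'; apply: mulr_ge0.
split; first by move=> u u'; apply: mulrC.
by under eq_bigr do rewrite -/(deg _ _) deg_prodw.
Qed.

End ProductWeight.

Lemma gconnected_prodw (U : finType) (s : U -> R) :
  (forall u, 0 < s u) -> gconnected (prodw s).
Proof. by move=> s_gt0 u u' _; apply: connect1; apply: mulr_gt0. Qed.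

Section Coupling.
Variables (U V : finType) (p : U -> R) (q : V -> R) (s : U * V -> R).
Hypotheses (s_ge0 : forall x, 0 <= s x) (p_sum1 : \sum_u p u = 1).
Hypotheses (s_row : forall u, \sum_v s (u, v) = p u)
           (s_col : forall v, \sum_u s (u, v) = q v).

Lemma coupling_sum1 : \sum_x s x = 1.
Proof.
rewrite -p_sum1 -(eq_bigr _ (fun u _ => s_row u)) pair_big /=.
by apply: eq_bigr => -[].
Qed.

Lemma coupling_marginal_sum1 : \sum_v q v = 1.
Proof.
by rewrite -(eq_bigr _ (fun v _ => s_col v)) exchange_big -p_sum1;
  apply: eq_bigr => u _; rewrite s_row.
Qed.

Lemma prodw_coupling_joining :
  weight_joining (prodw p) (prodw q) (prodw s).
Proof.
have degs x : deg (prodw s) x = s x by exact: (deg_prodw coupling_sum1).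
split; first exact: weight_fun_prodw coupling_sum1 s_ge0.
split.
  by move=> u; rewrite deg_prodw // -s_row; apply: eq_bigr => v _; rewrite degs.
split.
  move=> v; rewrite deg_prodw ?coupling_marginal_sum1 // -s_col.
  by apply: eq_bigr => u _; rewrite degs.
split.
  move=> u v u'; rewrite degs deg_prodw // /prodw -mulr_sumr s_row.
  by rewrite [RHS]mulrC mulrCA.
move=> u v v'; rewrite degs deg_prodw ?coupling_marginal_sum1 // /prodw.
by rewrite -mulr_sumr s_col [RHS]mulrC mulrCA.
Qed.

Lemma coupling_not_weakly_disjoint u v :
  s (u, v) != p u * q v -> ~ weakly_disjoint (prodw p) (prodw q).
Proof.
move=> /eqP s_uv wd; apply: s_uv.
have := wd _ prodw_coupling_joining u v.
by rewrite !deg_prodw ?coupling_sum1 ?coupling_marginal_sum1.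
Qed.

End Coupling.

Lemma gdiv_deg_bool (W : finType) (c : W -> W -> R) (a : bool -> bool -> R)
    (w w' : W) :
  w != w' -> gdiv c a -> exists x, deg c w = deg a x.
Proof.
move=> ww' [phi [phi_surj [phi_deg _]]].
have [x phix] := phi_surj w; have [x' phix'] := phi_surj w'.
have phiNx : phi (~~ x) = w'.
  by case: x x' phix phix' => -[] //= e e'; move: ww'; rewrite -e -e' eqxx.
exists x; rewrite phi_deg big_mkcond big_bool /=.
case: x phix phiNx => /= -> ->; rewrite eqxx eq_sym (negbTE ww') ?addr0 ?add0r //.
Qed.

(* Numerals at type [R] would be read in [R_scope] (as [IZR], [Rdiv]), which
   [lra] does not understand; at the alias [RF] they are ring numerals. *)
Definition RF : realFieldType := R.

Definition half (u : bool) : RF := 1 / 2.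
Definition third (v : bool) : RF := if v then 2 / 3 else 1 / 3.
(* Not the product coupling of [half] and [third]: it vanishes at (true, false). *)
Definition skew_coupling (x : bool * bool) : RF :=
  match x with
  | (false, false) => 1 / 3 | (false, true) => 1 / 6
  | (true, false) => 0 | (true, true) => 1 / 2
  end.

Theorem proposition4p8 :
  exists (U V : finType) (a : U -> U -> R) (b : V -> V -> R),
    weight_fun a /\ weight_fun b /\ gconnected a /\ gconnected b /\
    (forall (W : finType) (c : W -> W -> R),
        weight_fun c -> nontrivial c -> ~ (gdiv c a /\ gdiv c b)) /\
    ~ weakly_disjoint a b.
Proof.
have half_sum1 : \sum_u half u = 1 by rewrite big_bool /= /half; lra.
have third_sum1 : \sum_v third v = 1 by rewrite big_bool /= /third; lra.
exists bool, bool, (prodw half), (prodw third).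
split; first by apply: weight_fun_prodw => // u; rewrite /half; lra.
split; first by apply: weight_fun_prodw => // -[]; rewrite /third; lra.
split; first by apply: gconnected_prodw => u; rewrite /half; lra.
split; first by apply: gconnected_prodw => -[]; rewrite /third; lra.
split.
  move=> W c _ [w [w' [ww' _]]].
  move=> [/(gdiv_deg_bool ww') [x degG] /(gdiv_deg_bool ww') [y]].
  by rewrite degG !deg_prodw // /half /third; case: y; lra.
apply: (@coupling_not_weakly_disjoint _ _ half third skew_coupling
          _ _ _ _ true false).
- by case=> -[] []; rewrite /=; lra.
- by [].
- by case; rewrite big_bool /= /half; lra.
- by case; rewrite big_bool /= /third; lra.
- by rewrite /half /third /=; apply/eqP; lra.
Qed.
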